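(* For each integer $d \ge 4$, one has $\mathrm{rc}_\ell(\Delta_d) \ge \log_2 \log_2 d$, where $\Delta_d = \{0,e_1,\dots,e_d\} \subseteq \mathbb{Z}^d$.
   Context: For $X, Y \subseteq \mathbb{Z}^d$, $\mathrm{rc}(X,Y)$ is the smallest number of inequalities in a linear system $Ax \le b$ satisfied by all points of $X$ and such that each point of $Y\setminus X$ violates at least one inequality. With $B_t = [-t,t]^d\cap\mathbb{Z}^d$, $\mathrm{rc}_\ell(X) = \max_{t\in\mathbb{Z}_{>0}} \mathrm{rc}(X,B_t)$. $e_i$ denotes the $i$-th standard unit vector. *)

From HB Require Import structures.
From mathcomp Require Import all_boot all_order all_algebra.
From mathcomp Require Import all_classical all_reals.
From mathcomp Require Import ereal exp.
Set Implicit Arguments. Unset Strict Implicit. Unset Printing Implicit Defensive.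
Import Order.TTheory GRing.Theory Num.Theory.
Local Open Scope classical_set_scope.
Local Open Scope ring_scope.

Definition pt (d : nat) := 'rV[int]_d.

Definition is_relaxation (R : realType) (d m : nat) (X Y : set (pt d)) : Prop :=
  exists (A : 'M[R]_(m, d)) (b : 'cV[R]_m),
    (forall x, X x -> forall i : 'I_m,
        \sum_(j < d) A i j * (x ord0 j)%:~R <= b i ord0) /\
    (forall y, Y y -> ~ X y -> exists i : 'I_m,
        b i ord0 < \sum_(j < d) A i j * (y ord0 j)%:~R).

(* rc(X,Y): the smallest number of inequalities (+oo if none exists). *)
Definition rc (R : realType) (d : nat) (X Y : set (pt d)) : \bar R :=
  ereal_inf [set ((m%:R : R)%:E) | m in [set m : nat | is_relaxation R m X Y]].

Definition box (d t : nat) : set (pt d) :=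
  [set x | forall j : 'I_d, `|x ord0 j| <= (t%:Z)].

(* rc_ell(X) = max_{t in Z_{>0}} rc(X, B_t)  (taken as a supremum in \bar R) *)
Definition rc_ell (R : realType) (d : nat) (X : set (pt d)) : \bar R :=
  ereal_sup [set @rc R d X (@box d t) | t in [set t : nat | (0 < t)%N]].

Definition Delta (d : nat) : set (pt d) :=
  [set x | x = 0 \/ exists i : 'I_d, x = delta_mx ord0 i].

Definition log2 (R : realType) (x : R) : R := ln x / ln 2.

From HB Require Import structures.
From mathcomp Require Import all_classical all_reals.
From mathcomp Require Import all_boot all_order all_algebra.
From mathcomp Require Import ereal exp.
From mathcomp Require Import lra.
Set Implicit Arguments. Unset Strict Implicit. Unset Printing Implicit Defensive.
Import Order.TTheory GRing.Theory Num.Theory.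
Local Open Scope ring_scope.

(* Each inequality a.x <= b valid on Delta_d satisfies a_p <= b for every p.
   By Erdos-Szekeres applied once per inequality, if 2^(2^m) < d there are
   coordinates i < l < j on which all m coefficient rows are monotone, so
   a_l >= min (a_i, a_j) and a.(e_i + e_j - e_l) <= max (a_i, a_j) <= b.  The
   point e_i + e_j - e_l lies in B_1 but not in Delta_d, so m inequalities never
   suffice: rc(Delta_d, B_1) > m whenever 2^(2^m) < d. *)

Lemma pigeonhole_fibres (T T' : finType) (g : T -> T') (S : {set T}) k :
  (#|T'| * k < #|S|)%N -> exists v, (k < #|[set x in S | g x == v]|)%N.
Proof.
move=> hS; apply/existsP; move: hS; apply: contraTT => /existsPn small.
rewrite -leqNgt -sum1_card (partition_big g predT) //= -sum_nat_const.
apply: leq_sum => v _; have := small v; rewrite -leqNgt; apply: leq_trans.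
by rewrite -sum1_card; apply/eq_leq/eq_bigl => x; rewrite inE.
Qed.

Section Monotone.
Local Open Scope order_scope.
Variables (disp : Order.disp_t) (T : orderType disp) (d : nat).
Implicit Types (f : 'I_d -> T) (S C : {set 'I_d}) (i j l : 'I_d).

Definition nondecreasing_on f S := {in S &, {homo f : x y / (x < y)%N >-> x <= y}}.
Definition nonincreasing_on f S := {in S &, {homo f : x y / (x < y)%N >-> y <= x}}.
Definition monotone_on f S := nondecreasing_on f S \/ nonincreasing_on f S.

Lemma monotone_onS f S S' : S' \subset S -> monotone_on f S -> monotone_on f S'.
Proof. by move/subsetP=> sS'S [mf|mf]; [left|right]; apply: sub_in2 mf. Qed.

Lemma monotone_on_mid f S i l j : monotone_on f S ->
  i \in S -> l \in S -> j \in S -> (i < l < j)%N -> (f i <= f l) || (f j <= f l).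
Proof.
by move=> [mf|mf] iS lS jS /andP[il lj]; [rewrite mf | rewrite (mf l j) ?orbT].
Qed.

Definition nondecreasingb f C := [forall x in C, forall y in C, (x < y)%N ==> (f x <= f y)].

Lemma nondecreasingP f C : reflect (nondecreasing_on f C) (nondecreasingb f C).
Proof.
apply: (iffP forall_inP) => [mf x y xC yC xy|mf x xC].
  by have /forall_inP/(_ y yC)/implyP := mf x xC; apply.
by apply/forall_inP => y yC; apply/implyP; apply: mf.
Qed.

Definition chain_from f S i C :=
  [&& C \subset S, nondecreasingb f C, i \in C & [forall x in C, (i <= x)%N]].

Definition chain_len f S i := (\max_(C | chain_from f S i C) #|C|)%N.

Lemma chain_from1 f S i : i \in S -> chain_from f S i [set i].
Proof.
move=> iS; rewrite /chain_from sub1set iS set11 /=; apply/andP; split.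
  by apply/nondecreasingP => x y /set1P-> /set1P->; rewrite ltnn.
by apply/forall_inP => x /set1P->.
Qed.

Lemma chain_fromU1 f S i j C : i \in S -> (i < j)%N -> f i <= f j ->
  chain_from f S j C -> chain_from f S i (i |: C).
Proof.
move=> iS ij fij /and4P[CS /nondecreasingP mf jC /forall_inP jmin].
rewrite /chain_from subUset sub1set iS CS setU11 /=; apply/andP; split.
  apply/nondecreasingP => x y /setU1P[->|xC] /setU1P[->|yC] xy.
  - by rewrite ltnn in xy.
  - have [<-//|jy] := eqVneq j y.
    by apply: le_trans fij (mf j y jC yC _); rewrite ltn_neqAle jy jmin.
  - by have := ltn_trans ij (leq_ltn_trans (jmin x xC) xy); rewrite ltnn.
  - exact: mf.
apply/forall_inP => x /setU1P[->//|xC].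
exact: ltnW (leq_trans ij (jmin x xC)).
Qed.

Lemma chain_len_gt0 f S i : i \in S -> (0 < chain_len f S i)%N.
Proof. by move=> iS; rewrite -(cards1 i); apply: leq_bigmax_cond; apply: chain_from1. Qed.

Lemma chain_len_lt f S i j : i \in S -> j \in S -> (i < j)%N -> f i <= f j ->
  (chain_len f S j < chain_len f S i)%N.
Proof.
move=> iS jS ij fij; rewrite /chain_len (bigop.bigmax_eq_arg [set j]); last exact: chain_from1.
case: arg_maxnP; first exact: chain_from1.
move=> C chC _; have /and4P[_ _ _ /forall_inP jmin] := chC.
have iC : i \notin C by apply/negP => /jmin; rewrite leqNgt ij.
have := cardsU1 i C; rewrite iC add1n => <-; apply: leq_bigmax_cond.
exact: chain_fromU1 chC.
Qed.

Theorem erdos_szekeres f S n : (n * n < #|S|)%N ->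
  exists2 S' : {set 'I_d}, S' \subset S & (n < #|S'|)%N /\ monotone_on f S'.
Proof.
case: n => [|n] hS.
  have /card_gt0P[i iS] := hS.
  exists [set i]; first by rewrite sub1set.
  by rewrite cards1; split=> //; left => x y /set1P-> /set1P->; rewrite ltnn.
have [/existsP[C /and3P[CS /nondecreasingP mf long]] | /existsPn short] :=
  boolP [exists C : {set 'I_d}, [&& C \subset S, nondecreasingb f C & (n.+1 < #|C|)%N]].
  by exists C => //; split=> //; left.
have len_le i : (chain_len f S i <= n.+1)%N.
  apply/bigmax_leqP => C /and4P[CS mf _ _].
  by have := short C; rewrite CS mf /= -leqNgt.
pose g i : 'I_n.+1 := inord (chain_len f S i).-1.
have g_eq_len : {in S &, forall x y, g x = g y -> chain_len f S x = chain_len f S y}.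
  move=> x y xS yS /(congr1 val) /=.
  rewrite !inordK ?prednK ?chain_len_gt0 // => /(congr1 succn).
  by rewrite !prednK ?chain_len_gt0.
have [v long] : exists v, (n.+1 < #|[set x in S | g x == v]|)%N.
  by apply: pigeonhole_fibres; rewrite card_ord.
exists [set x in S | g x == v]; first by apply/subsetP => x /setIdP[].
split=> //; right => x y /setIdP[xS /eqP gx] /setIdP[yS /eqP gy] xy.
have [//|/ltW fxy] := leP (f y) (f x).
by have := chain_len_lt xS yS xy fxy; rewrite (g_eq_len x y) ?gx ?gy ?ltnn.
Qed.

Lemma monotone_subset_seq (I : eqType) (F : I -> 'I_d -> T) (s : seq I) S :
  (2 ^ 2 ^ size s < #|S|)%N -> exists2 S' : {set 'I_d}, S' \subset S &
    (2 < #|S'|)%N /\ {in s, forall k, monotone_on (F k) S'}.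
Proof.
elim: s S => [|k s IH] S hS; first by exists S.
have [|S1 S1S [big1 mono1]] := erdos_szekeres (F k) (n := 2 ^ 2 ^ size s) (S := S).
  by rewrite mulnn -expnM -expnSr.
have [S' S'S1 [big' mono']] := IH S1 big1.
exists S'; first exact: subset_trans S'S1 S1S.
by split=> // k' /predU1P[->|/mono'//]; apply: monotone_onS mono1.
Qed.

Lemma common_monotone_subset (I : finType) (F : I -> 'I_d -> T) S :
  (2 ^ 2 ^ #|I| < #|S|)%N ->
  exists2 S' : {set 'I_d}, S' \subset S & (2 < #|S'|)%N /\ forall k, monotone_on (F k) S'.
Proof.
move=> big; have [|S' S'S [big' mono]] := monotone_subset_seq F (s := enum I) (S := S).
  by rewrite -cardE.
by exists S' => //; split=> // k; apply: mono; rewrite mem_enum.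
Qed.

Lemma ordered_triple S : (2 < #|S|)%N ->
  exists i l j, [/\ i \in S, l \in S, j \in S & (i < l < j)%N].
Proof.
move=> big; have /card_gt0P[a aS] : (0 < #|S|)%N by apply: leq_trans big.
case: (arg_minnP val aS) => i iS imin; case: (arg_maxnP val aS) => j jS jmax.
have /card_gt0P[l] : (0 < #|S :\: [set i; j]|)%N.
  rewrite cardsD subn_gt0 (leq_ltn_trans _ big) //.
  by rewrite (leq_trans (subset_leq_card (subsetIr _ _))) // cards2; case: (_ != _).
rewrite !inE negb_or => /andP[/andP[li lj] lS].
exists i, l, j; rewrite !ltn_neqAle imin ?jmax // andbT; split=> //.
by apply/and3P; split; [rewrite eq_sym; exact: li | exact: lj | exact: jmax].
Qed.

End Monotone.

Section DotProduct.
Variables (R : pzRingType) (d : nat).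
Implicit Types (a : 'I_d -> R) (x y : pt d) (i j l p : 'I_d).

Definition dotZ a x : R := \sum_(j < d) a j * (x ord0 j)%:~R.

Lemma dotZD a x y : dotZ a (x + y) = dotZ a x + dotZ a y.
Proof. by rewrite /dotZ -big_split; apply: eq_bigr => j _; rewrite mxE intrD mulrDr. Qed.

Lemma dotZB a x y : dotZ a (x - y) = dotZ a x - dotZ a y.
Proof. by rewrite /dotZ -sumrB; apply: eq_bigr => j _; rewrite !mxE intrB mulrBr. Qed.

Lemma dotZ_delta a p : dotZ a (delta_mx ord0 p) = a p.
Proof.
rewrite /dotZ (bigD1 p) //= mxE !eqxx mulr1 big1 ?addr0 // => j /negbTE jp.
by rewrite mxE jp andbF mulr0.
Qed.

Definition delta_comb i j l : pt d :=
  delta_mx ord0 i + delta_mx ord0 j - delta_mx ord0 l.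

Lemma dotZ_delta_comb a i j l : dotZ a (delta_comb i j l) = a i + a j - a l.
Proof. by rewrite dotZB dotZD !dotZ_delta. Qed.

Lemma delta_comb_at_l i j l : i != l -> j != l -> delta_comb i j l ord0 l = -1.
Proof.
move=> il jl; rewrite !mxE !eqxx /= (eq_sym l i) (eq_sym l j) (negbTE il) (negbTE jl).
by rewrite mulr0n !add0r.
Qed.

Lemma delta_comb_box1 i j l : i != l -> j != l -> i != j -> @box d 1 (delta_comb i j l).
Proof.
move=> il jl ij p; rewrite !mxE eqxx /=.
have [->|pi] := eqVneq p i; first by rewrite (negbTE ij) (negbTE il).
have [->|pj] := eqVneq p j; first by rewrite (negbTE jl).
by case: (p == l).
Qed.

Lemma delta_comb_notin_Delta i j l : i != l -> j != l -> ~ @Delta d (delta_comb i j l).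
Proof.
move=> il jl [x0|[p xp]]; have := delta_comb_at_l il jl.
  by rewrite x0 mxE.
by rewrite xp mxE; case: (l == p).
Qed.

End DotProduct.

Lemma Delta_ineq_delta_comb (R : realDomainType) d (a : 'I_d -> R) b i j l :
  (forall x, @Delta d x -> dotZ a x <= b) -> (a i <= a l) || (a j <= a l) ->
  dotZ a (delta_comb i j l) <= b.
Proof.
move=> valid mid; rewrite dotZ_delta_comb.
have valid_e p : a p <= b by rewrite -dotZ_delta; apply: valid; right; exists p.
by have := valid_e i; have := valid_e j; case/orP: mid => ?; lra.
Qed.

Lemma no_relaxation_Delta_box1 (R : realType) d m :
  (2 ^ 2 ^ m < d)%N -> ~ is_relaxation R m (@Delta d) (@box d 1).
Proof.
move=> big [A [b [valid cut]]].
have [|S _ [S3 mono]] := common_monotone_subset (fun k : 'I_m => A k) (S := [set: 'I_d]).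
  by rewrite card_ord cardsT card_ord.
have [i [l [j [iS lS jS ilj]]]] := ordered_triple S3.
have [il lj ij] : [/\ i != l, j != l & i != j].
  case/andP: ilj => il lj.
  by rewrite -!val_eqE /= !neq_ltn il lj (ltn_trans il lj) orbT.
have [k] := cut _ (delta_comb_box1 il lj ij) (delta_comb_notin_Delta il lj).
apply/negP; rewrite -leNgt; apply: Delta_ineq_delta_comb.
  by move=> x /valid /(_ k).
exact: monotone_on_mid (mono k) iS lS jS ilj.
Qed.

Lemma log2_expr2 (R : realType) n : log2 (2 ^+ n : R) = n%:R.
Proof.
rewrite /log2 lnXn // -[ln 2 *+ n]mulr_natl mulfK //.
by rewrite gt_eqF // ln_gt0 // ltr1n.
Qed.

Lemma ler_log2 (R : realType) (x y : R) : 0 < x -> x <= y -> log2 x <= log2 y.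
Proof.
move=> x0 xy; rewrite /log2 ler_pM2r ?invr_gt0 ?ln_gt0 ?ltr1n //.
by rewrite ler_ln ?posrE // (lt_le_trans x0).
Qed.

Lemma log2_log2_le (R : realType) (n m : nat) :
  (1 < n)%N -> (n <= 2 ^ 2 ^ m)%N -> log2 (log2 (n%:R : R)) <= m%:R.
Proof.
move=> n1 nle; rewrite -(log2_expr2 R m).
have n1R : 1 < n%:R :> R by rewrite ltr1n.
apply: ler_log2; first by rewrite divr_gt0 ?ln_gt0 ?ltr1n.
rewrite -natrX -(log2_expr2 R (2 ^ m)); apply: ler_log2; first exact: lt_trans n1R.
by rewrite -natrX ler_nat.
Qed.

Theorem theorem3p6 (R : realType) (d : nat) :
  (4 <= d)%N -> ((log2 (log2 (d%:R : R)))%:E <= @rc_ell R d (@Delta d))%E.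
Proof.
move=> d4.
have rc_box1 : ((log2 (log2 (d%:R : R)))%:E <= rc R (@Delta d) (@box d 1))%E.
  apply: le_ereal_inf_tmp => _ [m relax <-]; rewrite lee_fin.
  apply: log2_log2_le; first exact: leq_trans d4.
  by rewrite leqNgt; apply/negP => big; apply: no_relaxation_Delta_box1 big relax.
by apply: le_trans rc_box1 _; apply: ereal_sup_ubound; exists 1%N.
Qed.
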